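(* Let $\lambda>0$, let $a\in C^1(\mathbb{R}^+)$ be non-decreasing and globally Lipschitz with $0<m\le a(s)\le M$ for all $s\ge 0$, and let $f\in C^2(\mathbb{R})$ be odd with $f(0)=0$, $f'(0)=1$, $sf''(s)<0$ for $s\neq 0$, and $\limsup_{|s|\to\infty} f(s)/s\le 0$. Consider the problem $$u_t=a(\|u_x\|^2)u_{xx}+\lambda f(u),\ x\in(0,\pi),\ t>0;\quad u(t,0)=u(t,\pi)=0;\quad u(0,\cdot)=u_0\in H^1_0(0,\pi),$$ and let $\{S(t):t\ge0\}$ be the associated semigroup on $H^1_0(0,\pi)$, with global attractor $\mathcal{A}$. Then the semigroup restricted to $\mathcal{A}$ is injective. In other words, if $u:\mathbb{R}\to H^1_0(0,\pi)$ and $v:\mathbb{R}\to H^1_0(0,\pi)$ are global solutions of this problem with $u(\mathbb{R})\cap v(\mathbb{R})\neq\emptyset$, then $u(\mathbb{R})=v(\mathbb{R})$.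
   Context: $\|\cdot\|$ denotes the norm of $L^2(0,\pi)$. A global solution is a map $\xi:\mathbb{R}\to H^1_0(0,\pi)$ with $S(t)\xi(s)=\xi(t+s)$ for all $t\ge0$, $s\in\mathbb{R}$. The global attractor is the compact invariant set attracting bounded sets; it consists of the values $\xi(0)$ of bounded global solutions. *)

From Stdlib Require Import Reals.
From Coquelicot Require Import Coquelicot.
Open Scope R_scope.

Definition C1_nonneg (a : R -> R) : Prop :=
  exists da : R -> R,
    (forall s, 0 < s -> is_derive a s (da s)) /\
    (forall s, 0 <= s -> forall eps, 0 < eps -> exists delta, 0 < delta /\
        forall r, 0 <= r -> Rabs (r - s) < delta ->
          Rabs (a r - a s) < eps /\ Rabs (da r - da s) < eps).

Definition nondecreasing_nonneg (a : R -> R) : Prop :=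
  forall s r, 0 <= s -> s <= r -> a s <= a r.

Definition lipschitz_nonneg (a : R -> R) : Prop :=
  exists L, 0 <= L /\ forall s r, 0 <= s -> 0 <= r -> Rabs (a s - a r) <= L * Rabs (s - r).

Definition hyp_a (a : R -> R) (m M : R) : Prop :=
  C1_nonneg a /\ nondecreasing_nonneg a /\ lipschitz_nonneg a /\
  0 < m /\ (forall s, 0 <= s -> m <= a s /\ a s <= M).

Definition C2 (f : R -> R) : Prop :=
  (forall x, ex_derive f x) /\ (forall x, ex_derive (Derive f) x) /\
  (forall x, continuous (Derive_n f 2) x).

Definition limsup_ratio_nonpos (f : R -> R) : Prop :=
  forall eps, 0 < eps -> exists K, forall s, K < Rabs s -> f s / s <= eps.

Definition hyp_f (f : R -> R) : Prop :=
  C2 f /\ (forall s, f (- s) = - f s) /\ f 0 = 0 /\ Derive f 0 = 1 /\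
  (forall s, s <> 0 -> s * Derive_n f 2 s < 0) /\ limsup_ratio_nonpos f.

Definition jcont (g : R -> R -> R) : Prop :=
  forall t x, 0 <= x <= PI -> forall eps, 0 < eps -> exists delta, 0 < delta /\
    forall t' x', 0 <= x' <= PI -> Rabs (t' - t) < delta -> Rabs (x' - x) < delta ->
      Rabs (g t' x' - g t x) < eps.

Definition grad_norm2 (w : R -> R) : R := RInt (fun y => (Derive w y) ^ 2) 0 PI.

(* A global (classical) solution on the whole time line R of
     u_t = a(||u_x||^2) u_xx + lambda f(u),  x in (0,pi),
     u(t,0) = u(t,pi) = 0.
   u t is represented as a function on R; only its values on [0,pi] matter
   (it is required to be C^2 in x, so that u_x, u_xx make sense up to the
   boundary). *)
Definition global_solution (a f : R -> R) (lambda : R) (u : R -> R -> R) : Prop :=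
  (forall t x, ex_derive (u t) x /\ ex_derive (Derive (u t)) x) /\
  (forall t x, 0 <= x <= PI -> ex_derive (fun s => u s x) t) /\
  jcont u /\ jcont (fun t x => Derive (u t) x) /\
  jcont (fun t x => Derive_n (u t) 2 x) /\
  jcont (fun t x => Derive (fun s => u s x) t) /\
  (forall t, u t 0 = 0 /\ u t PI = 0) /\
  (forall t x, 0 < x < PI ->
     Derive (fun s => u s x) t
     = a (grad_norm2 (u t)) * Derive_n (u t) 2 x + lambda * f (u t x)).

(* equality of two states as elements of H^1_0(0,pi) (functions on [0,pi]) *)
Definition same_state (w z : R -> R) : Prop := forall x, 0 <= x <= PI -> w x = z x.

From Stdlib Require Import Reals Lra Psatz Classical.
From Coquelicot Require Import Coquelicot.
Open Scope R_scope.

(* Let w = u - v for two global solutions.  On a bounded time interval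
   w_t = α(t) w_xx + g with α(t) = a(‖u_x(t)‖²) ∈ [m, M] and
   ‖g‖² ≤ C₁ ‖w_x‖² + C₂ ‖w‖², because a is Lipschitz and f is Lipschitz on the
   range of u and v.  For N = ‖w‖² and P = ‖w_x‖² the energy identity
   N' = 2 ⟨w_t, w⟩ gives N' ≤ K N, hence forward uniqueness.  While N > 0 the
   Dirichlet quotient P / N grows at most exponentially (the Agmon–Nirenberg
   log-convexity argument), which gives N' ≥ -K' N and hence backward
   uniqueness.  So if u(s) = v(t), then u and v(· + t - s) agree at time s,
   hence at all times, and u(ℝ) = v(ℝ). *)

(** * Continuity on [0, π] *)

(* States are only meaningful on [0, π]; composing with [clamp] extends them
   continuously to ℝ, so that Coquelicot's continuity and integration lemmas
   on the whole line apply. *)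
Definition clamp (x : R) : R := Rmax 0 (Rmin PI x).

Lemma clamp_range x : 0 <= clamp x <= PI.
Proof. unfold clamp, Rmax, Rmin; pose proof PI_RGT_0; repeat destruct Rle_dec; lra. Qed.

Lemma clamp_id x : 0 <= x <= PI -> clamp x = x.
Proof. unfold clamp, Rmax, Rmin; repeat destruct Rle_dec; lra. Qed.

Lemma clamp_lipschitz x y : Rabs (clamp x - clamp y) <= Rabs (x - y).
Proof.
  unfold clamp, Rmax, Rmin; pose proof PI_RGT_0.
  repeat destruct Rle_dec; unfold Rabs; repeat destruct Rcase_abs; lra.
Qed.

Definition cont_0PI (h : R -> R) : Prop :=
  forall z, continuous (fun x => h (clamp x)) z.

Definition cont2_0PI (g : R -> R -> R) : Prop :=
  forall t x, continuity_2d_pt (fun s y => g s (clamp y)) t x.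

Lemma jcont_cont2_0PI g : jcont g -> cont2_0PI g.
Proof.
  intros H t x eps.
  destruct (H t (clamp x) (clamp_range x) eps (cond_pos eps)) as [d [Hd Hclose]].
  exists (mkposreal d Hd); simpl; intros s y Hs Hy.
  apply Hclose; auto using clamp_range.
  eapply Rle_lt_trans; [apply clamp_lipschitz | exact Hy].
Qed.

Lemma cont2_0PI_slice g t : cont2_0PI g -> cont_0PI (g t).
Proof.
  intros H z. apply continuity_pt_filterlim, continuity_pt_locally. intros eps.
  destruct (H t z eps) as [d Hd]. exists d. intros y Hy.
  apply (Hd t y); auto. rewrite Rminus_eq_0, Rabs_R0. apply cond_pos.
Qed.

Lemma cont_0PI_const c : cont_0PI (fun _ => c).
Proof. intros z. apply continuous_const. Qed.

Lemma cont_0PI_plus h k : cont_0PI h -> cont_0PI k -> cont_0PI (fun x => h x + k x).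
Proof. intros H K z. apply (continuous_plus (fun x => h (clamp x)) (fun x => k (clamp x))); auto. Qed.

Lemma cont_0PI_minus h k : cont_0PI h -> cont_0PI k -> cont_0PI (fun x => h x - k x).
Proof. intros H K z. apply (continuous_minus (fun x => h (clamp x)) (fun x => k (clamp x))); auto. Qed.

Lemma cont_0PI_mult h k : cont_0PI h -> cont_0PI k -> cont_0PI (fun x => h x * k x).
Proof. intros H K z. apply (continuous_mult (fun x => h (clamp x)) (fun x => k (clamp x))); auto. Qed.

Lemma cont_0PI_pow2 h : cont_0PI h -> cont_0PI (fun x => h x ^ 2).
Proof.
  intros H z. apply (continuous_ext (fun x => h (clamp x) * h (clamp x))).
  - intros x. simpl. ring.
  - now apply cont_0PI_mult.
Qed.

Lemma cont2_0PI_const c : cont2_0PI (fun _ _ => c).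
Proof. intros t x. apply continuity_2d_pt_const. Qed.

Lemma cont2_0PI_time_indep h : cont_0PI h -> cont2_0PI (fun _ x => h x).
Proof.
  intros H t x. apply (continuity_1d_2d_pt_comp (fun y => h (clamp y)) (fun _ y => y)).
  - apply continuity_pt_filterlim, H.
  - apply continuity_2d_pt_id2.
Qed.

Lemma cont2_0PI_plus g h : cont2_0PI g -> cont2_0PI h -> cont2_0PI (fun t x => g t x + h t x).
Proof. intros G H t x. apply (continuity_2d_pt_plus (fun s y => g s (clamp y)) (fun s y => h s (clamp y))); auto. Qed.

Lemma cont2_0PI_minus g h : cont2_0PI g -> cont2_0PI h -> cont2_0PI (fun t x => g t x - h t x).
Proof. intros G H t x. apply (continuity_2d_pt_minus (fun s y => g s (clamp y)) (fun s y => h s (clamp y))); auto. Qed.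

Lemma cont2_0PI_mult g h : cont2_0PI g -> cont2_0PI h -> cont2_0PI (fun t x => g t x * h t x).
Proof. intros G H t x. apply (continuity_2d_pt_mult (fun s y => g s (clamp y)) (fun s y => h s (clamp y))); auto. Qed.

Lemma cont2_0PI_ext g h : (forall t x, g t x = h t x) -> cont2_0PI g -> cont2_0PI h.
Proof. intros E G t x. apply (continuity_2d_pt_ext (fun s y => g s (clamp y))); auto. Qed.

Lemma cont_0PI_bounded h : cont_0PI h -> exists B, forall x, 0 <= x <= PI -> Rabs (h x) <= B.
Proof.
  intros H. pose proof PI_RGT_0.
  destruct (continuity_ab_maj (fun x => Rabs (h (clamp x))) 0 PI) as [xm [Hm _]]; [lra| |].
  - intros c _. apply (continuity_pt_comp (fun x => h (clamp x)) Rabs).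
    + apply continuity_pt_filterlim, H.
    + apply Rcontinuity_abs.
  - exists (Rabs (h (clamp xm))). intros x Hx.
    rewrite <- (clamp_id x Hx). apply Hm, Hx.
Qed.

Lemma cont2_0PI_bounded g T0 T1 : cont2_0PI g ->
  exists B, forall t x, T0 <= t <= T1 -> 0 <= x <= PI -> Rabs (g t x) <= B.
Proof.
  intros Hg.
  destruct (cont_0PI_bounded (g T0) (cont2_0PI_slice g T0 Hg)) as [B0 HB0].
  destruct (uniform_continuity_2d (fun s y => g s (clamp y)) T0 T1 0 PI
              (fun t x _ _ => Hg t x) (mkposreal 1 Rlt_0_1)) as [d Hd].
  simpl in Hd. pose proof (cond_pos d).
  (* each time step of length d/2 costs at most 1 *)
  assert (Hstrip : forall (n : nat) t x, T0 <= t <= T1 -> t <= T0 + INR n * (d / 2) ->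
            0 <= x <= PI -> Rabs (g t x) <= B0 + INR n).
  { induction n as [|n IH]; intros t x Ht Htn Hx.
    - simpl in *. replace t with T0 by lra. rewrite Rplus_0_r. auto.
    - rewrite S_INR in *. destruct (Rle_lt_dec t (T0 + INR n * (d / 2))) as [Hle|Hlt].
      + specialize (IH t x Ht Hle Hx). lra.
      + assert (Hn : 0 <= INR n * (d / 2)) by (apply Rmult_le_pos; [apply pos_INR | lra]).
        assert (Ht' : T0 <= T0 + INR n * (d / 2) <= T1) by lra.
        assert (Hstep : Rabs (g t (clamp x) - g (T0 + INR n * (d / 2)) (clamp x)) < 1).
        { apply Hd; auto.
          - rewrite Rabs_right; lra.
          - rewrite Rminus_eq_0, Rabs_R0. lra. }
        rewrite clamp_id in Hstep by auto.
        specialize (IH _ x Ht' (Rle_refl _) Hx).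
        revert Hstep IH. unfold Rabs; repeat destruct Rcase_abs; lra. }
  destruct (INR_unbounded ((T1 - T0) / (d / 2))) as [n Hn].
  exists (B0 + INR n). intros t x Ht Hx. apply Hstrip; auto.
  apply Rmult_gt_compat_r with (r := d / 2) in Hn; [|lra].
  replace ((T1 - T0) / (d / 2) * (d / 2)) with (T1 - T0) in Hn by (field; lra). lra.
Qed.

Lemma cont2_0PI_unif_time g t0 : cont2_0PI g -> forall eps, 0 < eps -> exists d, 0 < d /\
  forall t x, Rabs (t - t0) < d -> 0 <= x <= PI -> Rabs (g t x - g t0 x) < eps.
Proof.
  intros G eps He.
  destruct (uniform_continuity_2d_1d' (fun s y => g s (clamp y)) 0 PI t0
              (fun x _ => G t0 x) (mkposreal eps He)) as [d Hd].
  exists d; split; [apply cond_pos|]. intros t x Ht Hx.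
  simpl in Hd. pose proof (cond_pos d).
  pose proof (Hd x t0 x t Hx) as K. rewrite clamp_id in K by auto.
  apply K; auto; try lra.
  - revert Ht; unfold Rabs; destruct Rcase_abs; lra.
  - rewrite Rminus_eq_0, Rabs_R0; lra.
Qed.

(** * Integrals over [0, π] *)

Ltac cont_0PI_auto := repeat match goal with
  | H : cont_0PI ?h |- cont_0PI ?h => exact H
  | H : cont_0PI ?h |- cont_0PI (fun x => ?h x) => exact H
  | H : cont2_0PI ?g |- cont_0PI (?g ?t) => exact (cont2_0PI_slice g t H)
  | H : cont2_0PI ?g |- cont_0PI (fun x => ?g ?t x) => exact (cont2_0PI_slice g t H)
  | |- cont_0PI (fun _ => ?c) => exact (cont_0PI_const c)
  | |- cont_0PI (fun x => @?h x ^ 2) => apply (cont_0PI_pow2 h)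
  | |- cont_0PI (fun x => @?h x + @?k x) => apply (cont_0PI_plus h k)
  | |- cont_0PI (fun x => @?h x - @?k x) => apply (cont_0PI_minus h k)
  | |- cont_0PI (fun x => @?h x * @?k x) => apply (cont_0PI_mult h k)
  end.

Lemma RInt_0PI_clamp (h : R -> R) : RInt h 0 PI = RInt (fun x => h (clamp x)) 0 PI.
Proof.
  pose proof PI_RGT_0. apply RInt_ext. intros x Hx.
  rewrite Rmin_left, Rmax_right in Hx by lra. rewrite clamp_id; auto; lra.
Qed.

Lemma ex_RInt_0PI h : cont_0PI h -> ex_RInt h 0 PI.
Proof.
  intros H. pose proof PI_RGT_0. apply (ex_RInt_ext (fun x => h (clamp x))).
  - intros x Hx. rewrite Rmin_left, Rmax_right in Hx by lra. rewrite clamp_id; auto; lra.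
  - apply (ex_RInt_continuous (V:=R_CompleteNormedModule)). intros; apply H.
Qed.

Ltac ex_RInt_0PI_auto := apply ex_RInt_0PI; cont_0PI_auto.

(* [RInt] lives in a Coquelicot normed module whose carrier is only
   convertible to [R], which [ring] does not see through. *)
Ltac ring_R := match goal with |- ?a = ?b => change (@eq R a b) end; ring.

Lemma RInt_plus_R (f g : R -> R) a b : ex_RInt f a b -> ex_RInt g a b ->
  RInt (fun x => f x + g x) a b = RInt f a b + RInt g a b.
Proof. intros. apply (RInt_plus (V:=R_CompleteNormedModule)); auto. Qed.

Lemma RInt_minus_R (f g : R -> R) a b : ex_RInt f a b -> ex_RInt g a b ->
  RInt (fun x => f x - g x) a b = RInt f a b - RInt g a b.
Proof. intros. apply (RInt_minus (V:=R_CompleteNormedModule)); auto. Qed.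

Lemma RInt_scal_R (f : R -> R) c a b : ex_RInt f a b ->
  RInt (fun x => c * f x) a b = c * RInt f a b.
Proof. intros. apply (RInt_scal (V:=R_CompleteNormedModule)); auto. Qed.

Lemma RInt_plus_scal_R (f g : R -> R) c a b : ex_RInt f a b -> ex_RInt g a b ->
  RInt (fun x => f x + c * g x) a b = RInt f a b + c * RInt g a b.
Proof.
  intros. rewrite RInt_plus_R, RInt_scal_R; auto.
  apply (ex_RInt_scal (V:=R_CompleteNormedModule)); auto.
Qed.

Lemma RInt_sq_nonneg h : cont_0PI h -> 0 <= RInt (fun x => h x ^ 2) 0 PI.
Proof.
  intros H. pose proof PI_RGT_0. apply RInt_ge_0; [lra | ex_RInt_0PI_auto |].
  intros; apply pow2_ge_0.
Qed.

Lemma RInt_sq_le_const h B : cont_0PI h -> (forall x, 0 <= x <= PI -> Rabs (h x) <= B) ->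
  RInt (fun x => h x ^ 2) 0 PI <= PI * B ^ 2.
Proof.
  intros Hh HB. pose proof PI_RGT_0.
  replace (PI * B ^ 2) with (RInt (fun _ => B ^ 2) 0 PI).
  2: { rewrite (RInt_const (V:=R_CompleteNormedModule)). unfold scal; simpl; unfold mult; simpl. ring. }
  apply RInt_le; [lra | ex_RInt_0PI_auto | ex_RInt_0PI_auto |].
  intros x Hx. specialize (HB x ltac:(lra)). pose proof (Rabs_pos (h x)).
  rewrite <- (pow2_abs (h x)). apply pow_incr. lra.
Qed.

Lemma RInt_sq_eq0 h : cont_0PI h -> RInt (fun x => h x ^ 2) 0 PI = 0 ->
  forall x, 0 <= x <= PI -> h x = 0.
Proof.
  intros Hh HN x0 Hx0. pose proof PI_RGT_0. apply NNPP. intros Hne.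
  set (hc := fun y => h (clamp y) ^ 2).
  assert (Hcont : forall y, continuous hc y) by (intros; unfold hc; apply (cont_0PI_pow2 h Hh)).
  assert (Hpos : 0 < hc x0) by (unfold hc; rewrite clamp_id by auto; apply pow2_gt_0, Hne).
  destruct (continuity_pt_locally hc x0) as [Hloc _].
  destruct (Hloc (proj2 (continuity_pt_filterlim hc x0) (Hcont x0)) (mkposreal _ Hpos)) as [d Hd].
  set (lo := Rmax 0 (x0 - d / 2)). set (hi := Rmin PI (x0 + d / 2)).
  assert (Hlohi : 0 <= lo < hi /\ hi <= PI).
  { pose proof (cond_pos d). unfold lo, hi, Rmax, Rmin; repeat destruct Rle_dec; lra. }
  assert (Ex : forall a b, ex_RInt hc a b).
  { intros a b. apply (ex_RInt_continuous (V:=R_CompleteNormedModule)). auto. }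
  assert (Hsplit : RInt hc 0 PI = RInt hc 0 lo + RInt hc lo hi + RInt hc hi PI).
  { rewrite <- (RInt_Chasles (V:=R_CompleteNormedModule) hc 0 hi PI); auto.
    rewrite <- (RInt_Chasles (V:=R_CompleteNormedModule) hc 0 lo hi); auto. }
  assert (0 <= RInt hc 0 lo) by (apply RInt_ge_0; auto; try lra; intros; apply pow2_ge_0).
  assert (0 <= RInt hc hi PI) by (apply RInt_ge_0; auto; try lra; intros; apply pow2_ge_0).
  assert (0 < RInt hc lo hi).
  { apply RInt_gt_0; [lra | | auto]. intros y Hy.
    assert (Hball : ball x0 d y).
    { pose proof (cond_pos d). unfold ball; simpl; unfold AbsRing_ball, abs, minus, plus, opp; simpl.
      unfold lo, hi, Rmax, Rmin in Hy; repeat destruct Rle_dec in Hy;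
        unfold Rabs; destruct Rcase_abs; lra. }
    specialize (Hd y Hball). simpl in Hd.
    revert Hd. unfold Rabs; destruct Rcase_abs; lra. }
  rewrite RInt_0PI_clamp in HN. fold hc in HN. lra.
Qed.

Lemma quadratic_nonneg_discr A B C : 0 <= C ->
  (forall s, 0 <= A + 2 * s * B + s ^ 2 * C) -> B ^ 2 <= A * C.
Proof.
  intros HC H. destruct (Rle_lt_or_eq_dec 0 C HC) as [Cpos|<-].
  - specialize (H (- B / C)).
    replace (A + 2 * (- B / C) * B + (- B / C) ^ 2 * C) with ((A * C - B ^ 2) / C) in H
      by (field; lra).
    assert (0 <= A * C - B ^ 2); [|lra].
    apply Rmult_le_reg_r with (/ C); [apply Rinv_0_lt_compat; auto|].
    rewrite Rmult_0_l. exact H.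
  - destruct (Req_dec B 0) as [->|Bn]; [nra|].
    specialize (H (- (A + 1) / (2 * B))).
    replace (A + 2 * (- (A + 1) / (2 * B)) * B + (- (A + 1) / (2 * B)) ^ 2 * 0) with (-1) in H
      by (field; auto).
    lra.
Qed.

Lemma RInt_Cauchy_Schwarz f g : cont_0PI f -> cont_0PI g ->
  RInt (fun x => f x * g x) 0 PI ^ 2 <=
  RInt (fun x => f x ^ 2) 0 PI * RInt (fun x => g x ^ 2) 0 PI.
Proof.
  intros Hf Hg. apply quadratic_nonneg_discr; [apply RInt_sq_nonneg; auto|]. intros s.
  replace (RInt (fun x => f x ^ 2) 0 PI + 2 * s * RInt (fun x => f x * g x) 0 PI +
           s ^ 2 * RInt (fun x => g x ^ 2) 0 PI)
    with (RInt (fun x => (f x + s * g x) ^ 2) 0 PI).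
  - apply RInt_sq_nonneg. cont_0PI_auto.
  - rewrite (RInt_ext _ (fun x => (f x ^ 2 + (2 * s) * (f x * g x)) + s ^ 2 * g x ^ 2))
      by (intros; simpl; ring).
    rewrite (RInt_plus_scal_R (fun x => f x ^ 2 + (2 * s) * (f x * g x))), RInt_plus_scal_R
      by ex_RInt_0PI_auto.
    reflexivity.
Qed.

Lemma is_derive_continuity_pt (f : R -> R) x l : is_derive f x l -> continuity_pt f x.
Proof. intros H. apply continuity_pt_filterlim, (ex_derive_continuous f). now exists l. Qed.

(* [h] need not be continuous on ℝ at the endpoints 0 and π, so
   [is_RInt_derive] does not apply; compare with a primitive of [h ∘ clamp]. *)
Lemma RInt_0PI_derive (F h : R -> R) : (forall x, 0 < x < PI -> is_derive F x (h x)) ->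
  (forall x, 0 <= x <= PI -> continuity_pt F x) -> cont_0PI h ->
  RInt h 0 PI = F PI - F 0.
Proof.
  intros HD HC Hh. pose proof PI_RGT_0.
  set (hc := fun y => h (clamp y)).
  set (G := fun x => RInt hc 0 x).
  assert (DG : forall x, is_derive G x (hc x)).
  { intros x. apply (is_derive_RInt (V:=R_CompleteNormedModule) hc G 0 x); [|apply Hh].
    apply filter_forall. intros b.
    apply (RInt_correct (V:=R_CompleteNormedModule)), (ex_RInt_continuous (V:=R_CompleteNormedModule)).
    intros; apply Hh. }
  destruct (MVT_gen (fun x => F x - G x) 0 PI (fun _ => 0)) as [c [_ Hc]].
  - intros x Hx. rewrite Rmin_left, Rmax_right in Hx by lra.
    replace 0 with (h x - hc x) at 1 by (unfold hc; rewrite clamp_id; lra).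
    apply (is_derive_minus F G); auto.
  - intros x Hx. rewrite Rmin_left, Rmax_right in Hx by lra.
    apply continuity_pt_minus; auto. eapply is_derive_continuity_pt; apply DG.
  - assert (G PI = RInt h 0 PI) by (unfold G; symmetry; apply RInt_0PI_clamp).
    assert (G 0 = 0) by apply (RInt_point (V:=R_CompleteNormedModule)).
    lra.
Qed.

Lemma RInt_0PI_by_parts (phi dphi psi dpsi : R -> R) :
  (forall x, is_derive phi x (dphi x)) -> (forall x, is_derive psi x (dpsi x)) ->
  cont_0PI phi -> cont_0PI dphi -> cont_0PI psi -> cont_0PI dpsi ->
  phi 0 = 0 -> phi PI = 0 ->
  RInt (fun x => dphi x * psi x) 0 PI = - RInt (fun x => phi x * dpsi x) 0 PI.
Proof.
  intros D1 D2 C1 C2 C3 C4 E0 EP.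
  assert (H : RInt (fun x => dphi x * psi x + phi x * dpsi x) 0 PI = phi PI * psi PI - phi 0 * psi 0).
  { apply (RInt_0PI_derive (fun x => phi x * psi x)).
    - intros x _. apply (is_derive_mult phi psi); auto. intros; apply Rmult_comm.
    - intros x _. apply continuity_pt_mult; eapply is_derive_continuity_pt; eauto.
    - cont_0PI_auto. }
  rewrite RInt_plus_R in H by ex_RInt_0PI_auto.
  rewrite E0, EP in H. lra.
Qed.

Lemma is_derive_RInt_0PI_param (F dF : R -> R -> R) t0 : cont2_0PI F -> cont2_0PI dF ->
  (forall s x, 0 <= x <= PI -> is_derive (fun s => F s x) s (dF s x)) ->
  is_derive (fun s => RInt (F s) 0 PI) t0 (RInt (dF t0) 0 PI).
Proof.
  intros HF HdF HD.
  assert (Dd : forall s y, Derive (fun u => F u (clamp y)) s = dF s (clamp y)).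
  { intros s y. apply is_derive_unique, HD, clamp_range. }
  rewrite RInt_0PI_clamp, (RInt_ext _ (fun y => Derive (fun u => F u (clamp y)) t0))
    by (intros; now rewrite Dd).
  apply (is_derive_ext (fun s => RInt (fun y => F s (clamp y)) 0 PI)).
  { intros s. symmetry. apply RInt_0PI_clamp. }
  apply (is_derive_RInt_param (fun s y => F s (clamp y))).
  - apply filter_forall. intros s y _. eexists. apply HD, clamp_range.
  - intros y _. apply (continuity_2d_pt_ext (fun s v => dF s (clamp v))); [|apply HdF].
    intros; now rewrite Dd.
  - apply filter_forall. intros s. apply (ex_RInt_continuous (V:=R_CompleteNormedModule)).
    intros z _. apply (cont2_0PI_slice F s HF z).
Qed.

Lemma Rabs_mult_sub_le a b a0 b0 e B1 B2 : Rabs (a - a0) < e -> Rabs (b - b0) < e ->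
  Rabs a0 <= B1 -> Rabs b0 <= B2 -> e <= 1 ->
  Rabs (a * b - a0 * b0) <= e * (B1 + B2 + 1).
Proof.
  intros H1 H2 H3 H4 H5.
  replace (a * b - a0 * b0) with ((a - a0) * b + a0 * (b - b0)) by ring.
  eapply Rle_trans; [apply Rabs_triang|]. rewrite !Rabs_mult.
  assert (Rabs b <= B2 + 1).
  { replace b with ((b - b0) + b0) by ring. eapply Rle_trans; [apply Rabs_triang|]. lra. }
  pose proof (Rabs_pos (a - a0)); pose proof (Rabs_pos a0); pose proof (Rabs_pos (b - b0)).
  pose proof (Rabs_pos b).
  assert (Rabs (a - a0) * Rabs b <= e * (B2 + 1)) by (apply Rmult_le_compat; lra).
  assert (Rabs a0 * Rabs (b - b0) <= B1 * e) by (apply Rmult_le_compat; lra).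
  nra.
Qed.

Lemma RInt_0PI_mult_cont2 (g h : R -> R -> R) t0 : cont2_0PI g -> cont2_0PI h ->
  forall eps, 0 < eps -> exists d, 0 < d /\ forall s r, Rabs (s - t0) < d -> Rabs (r - t0) < d ->
  Rabs (RInt (fun x => g s x * h r x) 0 PI - RInt (fun x => g t0 x * h t0 x) 0 PI) < eps.
Proof.
  intros G H eps He. pose proof PI_RGT_0.
  destruct (cont_0PI_bounded (g t0) (cont2_0PI_slice g t0 G)) as [B1 HB1].
  destruct (cont_0PI_bounded (h t0) (cont2_0PI_slice h t0 H)) as [B2 HB2].
  assert (0 <= B1) by (specialize (HB1 0); pose proof (Rabs_pos (g t0 0)); lra).
  assert (0 <= B2) by (specialize (HB2 0); pose proof (Rabs_pos (h t0 0)); lra).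
  set (e := Rmin 1 (eps / (PI * (B1 + B2 + 2)))).
  assert (He0 : 0 < e) by (apply Rmin_pos; [lra | apply Rdiv_lt_0_compat; nra]).
  assert (He1 : e <= 1) by apply Rmin_l.
  assert (He2 : e * (PI * (B1 + B2 + 2)) <= eps).
  { apply Rmult_le_reg_r with (/ (PI * (B1 + B2 + 2))); [apply Rinv_0_lt_compat; nra|].
    rewrite Rmult_assoc, Rinv_r by nra. rewrite Rmult_1_r. apply Rmin_r. }
  destruct (cont2_0PI_unif_time g t0 G e He0) as [d1 [Hd1 K1]].
  destruct (cont2_0PI_unif_time h t0 H e He0) as [d2 [Hd2 K2]].
  exists (Rmin d1 d2); split; [apply Rmin_pos; lra|]. intros s r Hs Hr.
  pose proof (Rmin_l d1 d2); pose proof (Rmin_r d1 d2).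
  rewrite <- RInt_minus_R by ex_RInt_0PI_auto.
  eapply Rle_lt_trans.
  - apply (abs_RInt_le_const _ 0 PI (e * (B1 + B2 + 1))); [lra | ex_RInt_0PI_auto |].
    intros x Hx. apply Rabs_mult_sub_le; auto; [apply K1 | apply K2]; auto; lra.
  - nra.
Qed.

(** * Energy identities *)

(* B(t+h, t+h) - B(t, t) = [B(t+h, t+h) - B(t, t+h)] + [B(t+h, t) - B(t, t)] by
   symmetry; the mean value theorem in the first variable handles each bracket. *)
Lemma is_derive_diag_sym (B D : R -> R -> R) t0 :
  (forall s r, B s r = B r s) ->
  (forall r s, is_derive (fun s => B s r) s (D s r)) ->
  (forall eps, 0 < eps -> exists d, 0 < d /\ forall s r,
     Rabs (s - t0) < d -> Rabs (r - t0) < d -> Rabs (D s r - D t0 t0) < eps) ->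
  is_derive (fun t => B t t) t0 (2 * D t0 t0).
Proof.
  intros Sym dB Dcont. apply is_derive_Reals. intros eps He.
  destruct (Dcont (eps / 2)) as [d [Hd K]]; [lra|].
  exists (mkposreal d Hd). simpl. intros h Hh0 Hh.
  assert (Hmvt : forall r, exists c, Rabs (c - t0) <= Rabs h /\
                   B (t0 + h) r - B t0 r = D c r * h).
  { intros r.
    destruct (MVT_gen (fun s => B s r) t0 (t0 + h) (fun s => D s r)) as [c [Hc E]].
    - intros; apply dB.
    - intros; eapply is_derive_continuity_pt; apply dB.
    - exists c. split.
      + revert Hc. unfold Rmin, Rmax; repeat destruct Rle_dec; unfold Rabs;
          repeat destruct Rcase_abs; lra.
      + rewrite E. ring. }
  destruct (Hmvt (t0 + h)) as [c1 [Hc1 E1]]. destruct (Hmvt t0) as [c2 [Hc2 E2]].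
  rewrite (Sym t0 (t0 + h)) in E1.
  replace ((B (t0 + h) (t0 + h) - B t0 t0) / h) with (D c1 (t0 + h) + D c2 t0)
    by (field_simplify_eq; auto; lra).
  assert (A1 : Rabs (D c1 (t0 + h) - D t0 t0) < eps / 2).
  { apply K; [lra|]. replace (t0 + h - t0) with h by ring. exact Hh. }
  assert (A2 : Rabs (D c2 t0 - D t0 t0) < eps / 2).
  { apply K; [lra|]. rewrite Rminus_eq_0, Rabs_R0; lra. }
  revert A1 A2. unfold Rabs; repeat destruct Rcase_abs; lra.
Qed.

Record smooth_field (W Wx Wxx Wt : R -> R -> R) : Prop := {
  sf_cont : cont2_0PI W;
  sf_cont_x : cont2_0PI Wx;
  sf_cont_xx : cont2_0PI Wxx;
  sf_cont_t : cont2_0PI Wt;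
  sf_derive_x : forall t x, is_derive (W t) x (Wx t x);
  sf_derive_xx : forall t x, is_derive (Wx t) x (Wxx t x);
  sf_derive_t : forall t x, 0 <= x <= PI -> is_derive (fun s => W s x) t (Wt t x);
  sf_boundary : forall t, W t 0 = 0 /\ W t PI = 0 }.

Definition norm2 (W : R -> R -> R) (t : R) : R := RInt (fun x => W t x ^ 2) 0 PI.
Definition inner (U V : R -> R -> R) (t : R) : R := RInt (fun x => U t x * V t x) 0 PI.

Lemma Young_ineq k g w : 0 < k -> 2 * (g * w) <= k * w ^ 2 + / k * g ^ 2.
Proof.
  intros Hk. apply Rmult_le_reg_l with k; auto.
  replace (k * (k * w ^ 2 + / k * g ^ 2)) with (k * k * w ^ 2 + g ^ 2) by (field; lra).
  pose proof (pow2_ge_0 (k * w - g)). nra.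
Qed.

Section Energy.

Variables W Wx Wxx Wt : R -> R -> R.
Hypothesis HW : smooth_field W Wx Wxx Wt.

Let JW := sf_cont _ _ _ _ HW.
Let JWx := sf_cont_x _ _ _ _ HW.
Let JWxx := sf_cont_xx _ _ _ _ HW.
Let JWt := sf_cont_t _ _ _ _ HW.

Lemma inner_W_Wxx t : inner W Wxx t = - norm2 Wx t.
Proof.
  unfold inner, norm2.
  rewrite (RInt_ext (fun x => Wx t x ^ 2) (fun x => Wx t x * Wx t x)) by (intros; simpl; ring).
  rewrite (RInt_0PI_by_parts (W t) (Wx t) (Wx t) (Wxx t)); try cont_0PI_auto.
  - symmetry; apply Ropp_involutive.
  - apply (sf_derive_x _ _ _ _ HW).
  - apply (sf_derive_xx _ _ _ _ HW).
  - apply (sf_boundary _ _ _ _ HW).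
  - apply (sf_boundary _ _ _ _ HW).
Qed.

Lemma is_derive_norm2 t0 : is_derive (norm2 W) t0 (2 * inner Wt W t0).
Proof.
  unfold norm2, inner. rewrite <- RInt_scal_R by ex_RInt_0PI_auto.
  apply (is_derive_RInt_0PI_param (fun s x => W s x ^ 2) (fun s x => 2 * (Wt s x * W s x))).
  - apply (cont2_0PI_ext (fun s x => W s x * W s x)); [intros; ring | now apply cont2_0PI_mult].
  - apply cont2_0PI_mult; [apply cont2_0PI_const | now apply cont2_0PI_mult].
  - intros s x Hx. apply (is_derive_ext (fun s => W s x * W s x)); [intros; simpl; ring|].
    replace (2 * (Wt s x * W s x)) with (plus (mult (Wt s x) (W s x)) (mult (W s x) (Wt s x)))
      by (unfold plus, mult; simpl; ring).
    apply (is_derive_mult (fun s => W s x) (fun s => W s x));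
      [apply (sf_derive_t _ _ _ _ HW) .. | intros; apply Rmult_comm]; auto.
Qed.

(* W_x need not be differentiable in time; instead norm2 Wx t = - B(t, t) with
   the symmetric form B(s, r) = ∫ W(s) W_xx(r), which is differentiable in s. *)
Lemma is_derive_norm2_x t0 : is_derive (norm2 Wx) t0 (-2 * inner Wt Wxx t0).
Proof.
  set (B := fun s r => RInt (fun x => W s x * Wxx r x) 0 PI).
  set (D := fun s r => RInt (fun x => Wt s x * Wxx r x) 0 PI).
  assert (Hbp : forall s r, RInt (fun x => Wx s x * Wx r x) 0 PI = - B s r).
  { intros s r. apply RInt_0PI_by_parts; try cont_0PI_auto.
    - apply (sf_derive_x _ _ _ _ HW).
    - apply (sf_derive_xx _ _ _ _ HW).
    - apply (sf_boundary _ _ _ _ HW).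
    - apply (sf_boundary _ _ _ _ HW). }
  assert (Sym : forall s r, B s r = B r s).
  { intros s r. apply Ropp_eq_reg. rewrite <- !Hbp. apply RInt_ext. intros; apply Rmult_comm. }
  assert (dB : forall r s, is_derive (fun s => B s r) s (D s r)).
  { intros r s. apply (is_derive_RInt_0PI_param (fun s x => W s x * Wxx r x)
                                              (fun s x => Wt s x * Wxx r x)).
    - apply cont2_0PI_mult; [auto | apply cont2_0PI_time_indep; cont_0PI_auto].
    - apply cont2_0PI_mult; [auto | apply cont2_0PI_time_indep; cont_0PI_auto].
    - intros s' x Hx. apply (is_derive_ext (fun s => Wxx r x * W s x)); [intros; apply Rmult_comm|].
      replace (Wt s' x * Wxx r x) with (Wxx r x * Wt s' x) by ring.
      apply is_derive_scal, (sf_derive_t _ _ _ _ HW); auto. }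
  apply (is_derive_ext (fun t => -1 * B t t)).
  { intros t. unfold norm2.
    rewrite (RInt_ext _ (fun x => Wx t x * Wx t x)) by (intros; simpl; ring).
    rewrite Hbp. ring_R. }
  replace (-2 * inner Wt Wxx t0) with (-1 * (2 * D t0 t0)) by (unfold D, inner; ring).
  apply is_derive_scal, is_derive_diag_sym; auto.
  apply RInt_0PI_mult_cont2; auto.
Qed.

Variables (t al : R).

Let G := norm2 (fun s x => Wt s x - al * Wxx s x) t.

Lemma inner_Wt_W_split : inner Wt W t =
  al * inner W Wxx t + RInt (fun x => (Wt t x - al * Wxx t x) * W t x) 0 PI.
Proof.
  unfold inner.
  rewrite (RInt_ext (fun x => Wt t x * W t x)
             (fun x => (Wt t x - al * Wxx t x) * W t x + al * (W t x * Wxx t x)))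
    by (intros; simpl; ring).
  rewrite RInt_plus_scal_R by ex_RInt_0PI_auto. ring_R.
Qed.

Lemma energy_upper k : 0 < k ->
  2 * inner Wt W t <= -2 * al * norm2 Wx t + k * norm2 W t + G / k.
Proof.
  intros Hk. rewrite inner_Wt_W_split, inner_W_Wxx.
  assert (2 * RInt (fun x => (Wt t x - al * Wxx t x) * W t x) 0 PI <= k * norm2 W t + G / k);
    [|lra].
  rewrite <- RInt_scal_R by ex_RInt_0PI_auto.
  replace (k * norm2 W t + G / k)
    with (RInt (fun x => k * W t x ^ 2 + / k * (Wt t x - al * Wxx t x) ^ 2) 0 PI).
  2: { unfold G, norm2, Rdiv. rewrite RInt_plus_scal_R, RInt_scal_R by ex_RInt_0PI_auto. ring_R. }
  pose proof PI_RGT_0.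
  apply RInt_le; [lra | ex_RInt_0PI_auto | ex_RInt_0PI_auto |].
  intros x _. apply Young_ineq; auto.
Qed.

Lemma energy_lower : -2 * al * norm2 Wx t - norm2 W t - G <= 2 * inner Wt W t.
Proof.
  rewrite inner_Wt_W_split, inner_W_Wxx.
  assert (- norm2 W t - G <= 2 * RInt (fun x => (Wt t x - al * Wxx t x) * W t x) 0 PI); [|lra].
  rewrite <- RInt_scal_R by ex_RInt_0PI_auto.
  replace (- norm2 W t - G)
    with (RInt (fun x => -1 * W t x ^ 2 + -1 * (Wt t x - al * Wxx t x) ^ 2) 0 PI).
  2: { unfold G, norm2. rewrite RInt_plus_scal_R, RInt_scal_R by ex_RInt_0PI_auto. ring_R. }
  pose proof PI_RGT_0.
  apply RInt_le; [lra | ex_RInt_0PI_auto | ex_RInt_0PI_auto |].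
  intros x _. pose proof (pow2_ge_0 (Wt t x - al * Wxx t x + W t x)). nra.
Qed.

(* Integrate (2α(-w_xx - Λ w) - (w_t - α w_xx))² ≥ 0 with Λ = P / N, using
   ∫ w w_xx = -P. *)
Lemma dirichlet_quotient_ineq : 0 < al -> 0 < norm2 W t ->
  0 <= inner Wt Wxx t + (norm2 Wx t / norm2 W t) * inner Wt W t + G / (4 * al).
Proof.
  intros Hal HN. pose proof PI_RGT_0. set (L := norm2 Wx t / norm2 W t).
  assert (Z : 0 <= RInt (fun x => Wt t x * Wxx t x + L * (Wt t x * W t x)
                  + (al * L) * (W t x * Wxx t x) + (al * L ^ 2) * W t x ^ 2
                  + / (4 * al) * (Wt t x - al * Wxx t x) ^ 2) 0 PI).
  { apply RInt_ge_0; [lra | ex_RInt_0PI_auto |]. intros x _.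
    replace (Wt t x * Wxx t x + L * (Wt t x * W t x) + al * L * (W t x * Wxx t x)
             + al * L ^ 2 * W t x ^ 2 + / (4 * al) * (Wt t x - al * Wxx t x) ^ 2)
      with (/ (4 * al) * (2 * al * (- Wxx t x - L * W t x) - (Wt t x - al * Wxx t x)) ^ 2)
      by (field; lra).
    apply Rmult_le_pos; [left; apply Rinv_0_lt_compat; lra | apply pow2_ge_0]. }
  rewrite !RInt_plus_scal_R in Z by ex_RInt_0PI_auto.
  fold (inner Wt Wxx t) (inner Wt W t) (inner W Wxx t) (norm2 W t) in Z.
  fold (norm2 (fun s x => Wt s x - al * Wxx s x) t) G in Z.
  rewrite inner_W_Wxx in Z.
  assert (L * norm2 W t = norm2 Wx t) by (unfold L; field; lra).
  unfold Rdiv. rewrite (Rmult_comm G). nra.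
Qed.

End Energy.

(** * Gronwall arguments *)

Lemma is_derive_nonpos_le (F dF : R -> R) a b : a <= b ->
  (forall t, a <= t <= b -> is_derive F t (dF t)) -> (forall t, a <= t <= b -> dF t <= 0) ->
  F b <= F a.
Proof.
  intros Hab HD Hd.
  destruct (MVT_gen F a b dF) as [c [Hc E]].
  - intros x Hx. rewrite Rmin_left, Rmax_right in Hx by lra. apply HD; lra.
  - intros x Hx. rewrite Rmin_left, Rmax_right in Hx by lra.
    eapply is_derive_continuity_pt, HD; lra.
  - rewrite Rmin_left, Rmax_right in Hc by lra. specialize (Hd c Hc). nra.
Qed.

Lemma gronwall_le (F dF : R -> R) k a b : a <= b ->
  (forall t, a <= t <= b -> is_derive F t (dF t)) -> (forall t, a <= t <= b -> dF t <= k * F t) ->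
  F b <= F a * exp (k * (b - a)).
Proof.
  intros Hab HD Hd.
  assert (Hdec : F b * exp (- k * b) <= F a * exp (- k * a)).
  { apply (is_derive_nonpos_le (fun t => F t * exp (- k * t))
             (fun t => (dF t - k * F t) * exp (- k * t))); auto.
    - intros t Ht.
      replace ((dF t - k * F t) * exp (- k * t))
        with (dF t * exp (- k * t) + F t * (exp (- k * t) * (- k * 1))) by ring.
      apply is_derive_Reals, (derivable_pt_lim_mult F (fun t => exp (- k * t))).
      + apply is_derive_Reals, HD; auto.
      + apply (derivable_pt_lim_comp (fun t => - k * t) exp).
        * apply derivable_pt_lim_scal, derivable_pt_lim_id.
        * apply derivable_pt_lim_exp.
    - intros t Ht. specialize (Hd t Ht). pose proof (exp_pos (- k * t)). nra. }
  apply Rmult_le_compat_r with (r := exp (k * b)) in Hdec; [|left; apply exp_pos].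
  rewrite !Rmult_assoc, <- !exp_plus in Hdec.
  replace (- k * b + k * b) with 0 in Hdec by ring.
  replace (- k * a + k * b) with (k * (b - a)) in Hdec by ring.
  rewrite exp_0, Rmult_1_r in Hdec. exact Hdec.
Qed.

Lemma gronwall_ge (F dF : R -> R) k a b : a <= b ->
  (forall t, a <= t <= b -> is_derive F t (dF t)) -> (forall t, a <= t <= b -> - k * F t <= dF t) ->
  F a * exp (- k * (b - a)) <= F b.
Proof.
  intros Hab HD Hd.
  assert (H := gronwall_le (fun t => - F t) (fun t => - dF t) (- k) a b Hab).
  assert (- F b <= - F a * exp (- k * (b - a))); [|lra].
  apply H.
  - intros t Ht. apply (is_derive_opp F). auto.
  - intros t Ht. specialize (Hd t Ht). lra.
Qed.

Lemma continuity_pt_eps (f : R -> R) x : continuity_pt f x ->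
  forall eps, 0 < eps -> exists d, 0 < d /\ forall y, Rabs (y - x) < d -> Rabs (f y - f x) < eps.
Proof.
  intros H eps He. destruct (H eps He) as [d [Hd K]]. exists d; split; auto.
  intros y Hy. destruct (Req_dec y x) as [->|Hne].
  - rewrite Rminus_eq_0, Rabs_R0; auto.
  - apply K. repeat split; auto.
Qed.

(* Continuous induction along the supremum of the interval on which N stays positive. *)
Lemma positive_lower_bound_persists (N : R -> R) c0 T0 T1 :
  T0 <= T1 -> 0 < c0 -> (forall t, continuity_pt N t) -> 0 < N T0 ->
  (forall t, T0 <= t <= T1 -> (forall s, T0 <= s <= t -> 0 < N s) -> c0 <= N t) ->
  c0 <= N T1.
Proof.
  intros HT Hc0 Ncont HN0 Hlow.
  set (S := fun t => T0 <= t <= T1 /\ forall s, T0 <= s <= t -> 0 < N s).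
  assert (ST0 : S T0) by (split; [lra|]; intros s Hs; replace s with T0 by lra; auto).
  destruct (completeness S) as [Ts [Tub Tlub]].
  { exists T1. intros t [Ht _]. lra. }
  { now exists T0. }
  assert (HT0s : T0 <= Ts) by (apply Tub, ST0).
  assert (HTs1 : Ts <= T1) by (apply Tlub; intros t [Ht _]; lra).
  assert (below : forall r, r < Ts -> exists s, S s /\ r < s).
  { intros r Hr. apply NNPP. intros Hno.
    assert (Ts <= r); [|lra]. apply Tlub. intros s Ss. apply Rnot_lt_le. intros Hrs.
    apply Hno. now exists s. }
  assert (HNTs : c0 <= N Ts).
  { apply Rnot_lt_le. intros Hlt.
    destruct (continuity_pt_eps N Ts (Ncont Ts) (c0 - N Ts)) as [d [Hd Kd]]; [lra|].
    destruct (below (Ts - d)) as [s [Ss Hs]]; [lra|].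
    assert (s <= Ts) by (apply Tub, Ss).
    assert (c0 <= N s) by (apply Hlow; apply Ss).
    assert (Rabs (N s - N Ts) < c0 - N Ts) by (apply Kd; unfold Rabs; destruct Rcase_abs; lra).
    revert H1. unfold Rabs; destruct Rcase_abs; lra. }
  assert (STs : S Ts).
  { split; [lra|]. intros s Hs. destruct (Req_dec s Ts) as [->|E]; [lra|].
    destruct (below s) as [s' [[_ Hs'] Hss']]; [lra|]. apply Hs'; lra. }
  destruct (Req_dec Ts T1) as [<-|E]; [exact HNTs|].
  destruct (continuity_pt_eps N Ts (Ncont Ts) (N Ts)) as [d [Hd Kd]]; [lra|].
  set (T' := Rmin T1 (Ts + d / 2)).
  assert (Ts < T') by (unfold T', Rmin; destruct Rle_dec; lra).
  assert (S T').
  { split; [unfold T', Rmin in *; destruct Rle_dec; lra|].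
    intros s Hs. destruct (Rle_lt_dec s Ts) as [Hle|Hlt]; [apply (proj2 STs); lra|].
    assert (Hab : Rabs (N s - N Ts) < N Ts).
    { apply Kd. unfold T', Rmin in Hs; destruct Rle_dec in Hs; unfold Rabs; destruct Rcase_abs; lra. }
    revert Hab. unfold Rabs; destruct Rcase_abs; lra. }
  assert (T' <= Ts) by (apply Tub; auto). lra.
Qed.

Section EnergyODE.

Variables N X P Y G al : R -> R.
Variables m M C1 C2 T0 T1 : R.
Hypotheses (Hm : 0 < m) (HT : T0 <= T1) (HC1 : 0 <= C1) (HC2 : 0 <= C2).
Hypothesis DN : forall t, is_derive N t (2 * X t).
Hypothesis DP : forall t, is_derive P t (-2 * Y t).
Hypothesis Hbounds : forall t, T0 <= t <= T1 ->
  0 <= N t /\ 0 <= P t /\ m <= al t /\ al t <= M /\ 0 <= G t /\ G t <= C1 * P t + C2 * N t.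
Hypothesis Hupper : forall t k, T0 <= t <= T1 -> 0 < k ->
  2 * X t <= -2 * al t * P t + k * N t + G t / k.
Hypothesis Hlower : forall t, T0 <= t <= T1 -> -2 * al t * P t - N t - G t <= 2 * X t.
Hypothesis Hquot : forall t, T0 <= t <= T1 -> 0 < N t ->
  0 <= Y t + (P t / N t) * X t + G t / (4 * al t).

Let k1 := C1 / (2 * m) + 1.
Let b1 := C2 / (2 * m).

Let k1_pos : 0 < k1.
Proof. assert (0 <= C1 / (2 * m)) by (apply Rdiv_le_0_compat; lra). unfold k1; lra. Qed.

Let b1_nonneg : 0 <= b1.
Proof. apply Rdiv_le_0_compat; lra. Qed.

(* With k = k1 the term C1 P / k is absorbed by -2 α P, leaving N' <= (k1 + C2 / k1) N. *)
Lemma energy_forward_zero : N T0 = 0 -> N T1 = 0.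
Proof.
  intros H0.
  assert (Hk : C1 / k1 <= 2 * m).
  { apply Rmult_le_reg_r with k1; [exact k1_pos|]. unfold Rdiv.
    rewrite Rmult_assoc, Rinv_l by (pose proof k1_pos; lra).
    unfold k1. field_simplify; [|lra].
    assert (0 <= C1 / (2 * m)) by (apply Rdiv_le_0_compat; lra). lra. }
  assert (N T1 <= 0); [|destruct (Hbounds T1) as [? _]; lra].
  rewrite <- (Rmult_0_l (exp ((k1 + C2 / k1) * (T1 - T0)))), <- H0.
  apply (gronwall_le N (fun t => 2 * X t)); auto.
  intros t Ht. destruct (Hbounds t Ht) as [HN [HP [Ha [_ [_ HG]]]]].
  pose proof (Hupper t k1 Ht k1_pos). pose proof k1_pos.
  assert (G t / k1 <= C1 / k1 * P t + C2 / k1 * N t).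
  { unfold Rdiv.
    replace (C1 * / k1 * P t + C2 * / k1 * N t) with ((C1 * P t + C2 * N t) * / k1) by ring.
    apply Rmult_le_compat_r; [left; apply Rinv_0_lt_compat|]; lra. }
  assert (C1 / k1 * P t <= 2 * al t * P t) by (apply Rmult_le_compat_r; lra).
  nra.
Qed.

Let quotient_derive_le t : T0 <= t <= T1 -> 0 < N t ->
  (-2 * Y t * N t - P t * (2 * X t)) / N t ^ 2 <= k1 * (P t / N t + b1 / k1).
Proof.
  intros Ht HN. destruct (Hbounds t Ht) as [_ [HP [Ha [_ [Hg HG]]]]].
  pose proof (Hquot t Ht HN) as HY.
  set (L := P t / N t) in *.
  assert (HL : 0 <= L) by (apply Rdiv_le_0_compat; lra).
  replace ((-2 * Y t * N t - P t * (2 * X t)) / N t ^ 2) with (-2 * (Y t + L * X t) / N t)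
    by (unfold L; field; lra).
  replace (k1 * (L + b1 / k1)) with (C1 / (2 * m) * L + L + b1)
    by (unfold k1; field; lra).
  apply Rle_trans with (G t / (2 * al t) / N t).
  { unfold Rdiv. apply Rmult_le_compat_r; [left; apply Rinv_0_lt_compat; lra|].
    replace (G t * / (2 * al t)) with (2 * (G t / (4 * al t))) by (field; lra).
    unfold Rdiv in HY. lra. }
  apply Rle_trans with ((C1 * P t + C2 * N t) / (2 * m) / N t).
  { unfold Rdiv. apply Rmult_le_compat_r; [left; apply Rinv_0_lt_compat; lra|].
    apply Rmult_le_compat; try lra.
    - left; apply Rinv_0_lt_compat; lra.
    - apply Rinv_le_contravar; lra. }
  replace ((C1 * P t + C2 * N t) / (2 * m) / N t) with (C1 / (2 * m) * L + b1)
    by (unfold L, b1; field; lra).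
  lra.
Qed.

Let quotient_max := (P T0 / N T0 + b1 / k1) * exp (k1 * (T1 - T0)).

Lemma dirichlet_quotient_bound t : T0 <= t <= T1 -> (forall s, T0 <= s <= t -> 0 < N s) ->
  P t / N t <= quotient_max.
Proof.
  intros Ht Hpos. pose proof k1_pos.
  assert (HN0 : 0 < N T0) by (apply Hpos; lra).
  assert (Hq0 : 0 <= P T0 / N T0) by (apply Rdiv_le_0_compat; [apply Hbounds|]; lra).
  assert (0 <= b1 / k1) by (apply Rdiv_le_0_compat; lra).
  assert (Hgr : P t / N t + b1 / k1 <= (P T0 / N T0 + b1 / k1) * exp (k1 * (t - T0))).
  { apply (gronwall_le (fun s => P s / N s + b1 / k1)
             (fun s => (-2 * Y s * N s - P s * (2 * X s)) / N s ^ 2)); [lra| |].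
    - intros r Hr. assert (0 < N r) by (apply Hpos; lra).
      rewrite <- (Rplus_0_r ((-2 * Y r * N r - P r * (2 * X r)) / N r ^ 2)).
      apply (is_derive_plus (fun s => P s / N s) (fun _ => b1 / k1)).
      + apply is_derive_div; auto. lra.
      + exact (is_derive_const (b1 / k1) r).
    - intros r Hr. apply quotient_derive_le; [lra | apply Hpos; lra]. }
  assert (exp (k1 * (t - T0)) <= exp (k1 * (T1 - T0))).
  { destruct (Req_dec t T1) as [->|E]; [lra|].
    left; apply exp_increasing. apply Rmult_lt_compat_l; lra. }
  unfold quotient_max. nra.
Qed.

Let decay_rate := (2 * M + C1) * quotient_max + 1 + C2.

Lemma energy_lower_bound t : T0 <= t <= T1 -> (forall s, T0 <= s <= t -> 0 < N s) ->
  N T0 * exp (- decay_rate * (T1 - T0)) <= N t.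
Proof.
  intros Ht Hpos.
  assert (HN0 : 0 < N T0) by (apply Hpos; lra).
  assert (Hq : 0 <= quotient_max).
  { unfold quotient_max. apply Rmult_le_pos; [|left; apply exp_pos].
    assert (0 <= P T0 / N T0) by (apply Rdiv_le_0_compat; [apply Hbounds|]; lra).
    assert (0 <= b1 / k1) by (apply Rdiv_le_0_compat; pose proof k1_pos; lra). lra. }
  assert (HmM : m <= M) by (destruct (Hbounds T0) as [_ [_ [? [? _]]]]; lra).
  assert (Hrate : 0 <= decay_rate) by (unfold decay_rate; nra).
  assert (Hgr : N T0 * exp (- decay_rate * (t - T0)) <= N t).
  { apply (gronwall_ge N (fun s => 2 * X s)); [lra | intros; apply DN |].
    intros s Hs. destruct (Hbounds s ltac:(lra)) as [HNs [HPs [Ha [HaM [Hg HG]]]]].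
    pose proof (Hlower s ltac:(lra)).
    assert (HNs' : 0 < N s) by (apply Hpos; lra).
    assert (P s <= quotient_max * N s).
    { replace (P s) with ((P s / N s) * N s) by (field; lra).
      apply Rmult_le_compat_r; [lra|].
      apply dirichlet_quotient_bound; [lra | intros; apply Hpos; lra]. }
    unfold decay_rate. nra. }
  assert (exp (- decay_rate * (T1 - T0)) <= exp (- decay_rate * (t - T0))).
  { destruct (Req_dec (- decay_rate * (T1 - T0)) (- decay_rate * (t - T0))) as [E|E];
      [rewrite E; lra|].
    left; apply exp_increasing. nra. }
  nra.
Qed.

Lemma energy_backward_zero : N T1 = 0 -> N T0 = 0.
Proof.
  intros HN1. destruct (Hbounds T0 ltac:(lra)) as [HN0 _].
  destruct (Rle_lt_or_eq_dec 0 (N T0) HN0) as [Hpos|]; [exfalso|auto].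
  assert (0 < N T0 * exp (- decay_rate * (T1 - T0))) by (apply Rmult_lt_0_compat; [lra | apply exp_pos]).
  assert (N T0 * exp (- decay_rate * (T1 - T0)) <= N T1); [|lra].
  apply (positive_lower_bound_persists N _ T0 T1); auto.
  - intros t. eapply is_derive_continuity_pt, DN.
  - exact energy_lower_bound.
Qed.

End EnergyODE.

(** * Solutions of the nonlocal problem *)

Definition uX (u : R -> R -> R) t x := Derive (u t) x.
Definition uXX (u : R -> R -> R) t x := Derive_n (u t) 2 x.
Definition uT (u : R -> R -> R) t x := Derive (fun s => u s x) t.
Definition field_diff (U V : R -> R -> R) t x := U t x - V t x.

Lemma global_solution_smooth a f lambda u : global_solution a f lambda u ->
  smooth_field u (uX u) (uXX u) (uT u).
Proof.
  intros [Hx [Ht [Ju [Jux [Juxx [Jut [BC _]]]]]]]. split.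
  - exact (jcont_cont2_0PI _ Ju).
  - exact (jcont_cont2_0PI _ Jux).
  - exact (jcont_cont2_0PI _ Juxx).
  - exact (jcont_cont2_0PI _ Jut).
  - intros t x. exact (Derive_correct _ _ (proj1 (Hx t x))).
  - intros t x. exact (Derive_correct _ _ (proj2 (Hx t x))).
  - intros t x H. exact (Derive_correct _ _ (Ht t x H)).
  - exact BC.
Qed.

Lemma smooth_field_diff U Ux Uxx Ut V Vx Vxx Vt :
  smooth_field U Ux Uxx Ut -> smooth_field V Vx Vxx Vt ->
  smooth_field (field_diff U V) (field_diff Ux Vx) (field_diff Uxx Vxx) (field_diff Ut Vt).
Proof.
  intros [A1 A2 A3 A4 A5 A6 A7 A8] [B1 B2 B3 B4 B5 B6 B7 B8]. unfold field_diff. split.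
  1-4: now apply cont2_0PI_minus.
  - intros t x. now apply (is_derive_minus (U t) (V t)).
  - intros t x. now apply (is_derive_minus (Ux t) (Vx t)).
  - intros t x Hx. apply (is_derive_minus (fun s => U s x) (fun s => V s x)); auto.
  - intros t. destruct (A8 t), (B8 t). split; lra.
Qed.

Lemma C1_locally_lipschitz f R0 : (forall y, ex_derive f y) ->
  (forall y, continuity_pt (Derive f) y) -> 0 <= R0 ->
  exists K, 0 <= K /\ forall y1 y2, Rabs y1 <= R0 -> Rabs y2 <= R0 ->
    Rabs (f y1 - f y2) <= K * Rabs (y1 - y2).
Proof.
  intros Hd Hc HR.
  destruct (continuity_ab_maj (fun y => Rabs (Derive f y)) (- R0) R0) as [ym [Hym _]]; [lra| |].
  { intros c _. apply (continuity_pt_comp (Derive f) Rabs); auto. apply Rcontinuity_abs. }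
  exists (Rabs (Derive f ym)). split; [apply Rabs_pos|]. intros y1 y2 H1 H2.
  destruct (MVT_gen f y2 y1 (Derive f)) as [c [Hcy E]].
  - intros x _. apply Derive_correct, Hd.
  - intros x _. apply (is_derive_continuity_pt _ x (Derive f x)), Derive_correct, Hd.
  - rewrite E, Rabs_mult. apply Rmult_le_compat_r; [apply Rabs_pos|].
    apply Hym. revert H1 H2 Hcy.
    unfold Rmin, Rmax, Rabs; repeat destruct Rle_dec; repeat destruct Rcase_abs; lra.
Qed.

Lemma grad_norm2_diff_sq w z : cont_0PI (Derive w) -> cont_0PI (Derive z) ->
  (grad_norm2 w - grad_norm2 z) ^ 2 <=
  RInt (fun x => (Derive w x - Derive z x) ^ 2) 0 PI *
  RInt (fun x => (Derive w x + Derive z x) ^ 2) 0 PI.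
Proof.
  intros Hw Hz. unfold grad_norm2.
  rewrite <- RInt_minus_R by ex_RInt_0PI_auto.
  rewrite (RInt_ext _ (fun x => (Derive w x - Derive z x) * (Derive w x + Derive z x)))
    by (intros; simpl; ring).
  apply RInt_Cauchy_Schwarz; cont_0PI_auto.
Qed.

Lemma RInt_sq_le_combination r g w A B : cont_0PI r -> cont_0PI g -> cont_0PI w ->
  (forall x, 0 < x < PI -> r x ^ 2 <= A * g x ^ 2 + B * w x ^ 2) ->
  RInt (fun x => r x ^ 2) 0 PI <=
  A * RInt (fun x => g x ^ 2) 0 PI + B * RInt (fun x => w x ^ 2) 0 PI.
Proof.
  intros Hr Hg Hw H. pose proof PI_RGT_0.
  rewrite <- RInt_scal_R, <- RInt_plus_scal_R by ex_RInt_0PI_auto.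
  apply RInt_le; [lra | ex_RInt_0PI_auto | ex_RInt_0PI_auto | exact H].
Qed.

Lemma sq_le_of_abs_le x y : Rabs x <= y -> x ^ 2 <= y ^ 2.
Proof. intros H. pose proof (Rabs_pos x). rewrite <- (pow2_abs x). apply pow_incr. lra. Qed.

Lemma sq_plus_lipschitz_le c g l y z K w : Rabs (y - z) <= K * Rabs w ->
  (c * g + l * (y - z)) ^ 2 <= 2 * c ^ 2 * g ^ 2 + 2 * l ^ 2 * K ^ 2 * w ^ 2.
Proof.
  intros H. apply sq_le_of_abs_le in H. rewrite Rpow_mult_distr, pow2_abs in H.
  assert (l ^ 2 * (y - z) ^ 2 <= l ^ 2 * (K ^ 2 * w ^ 2)) by (apply Rmult_le_compat_l; [apply pow2_ge_0 | exact H]).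
  pose proof (pow2_ge_0 (c * g - l * (y - z))). nra.
Qed.

Lemma diffusion_gap_sq_le a L u v t : 0 <= L ->
  (forall s r, 0 <= s -> 0 <= r -> Rabs (a s - a r) <= L * Rabs (s - r)) ->
  cont2_0PI (uX u) -> cont2_0PI (uX v) ->
  (a (grad_norm2 (u t)) - a (grad_norm2 (v t))) ^ 2 <=
  L ^ 2 * (norm2 (field_diff (uX u) (uX v)) t * RInt (fun x => (uX u t x + uX v t x) ^ 2) 0 PI).
Proof.
  intros HL HLip Jux Jvx.
  assert (0 <= grad_norm2 (u t)) by (apply (RInt_sq_nonneg (uX u t)); cont_0PI_auto).
  assert (0 <= grad_norm2 (v t)) by (apply (RInt_sq_nonneg (uX v t)); cont_0PI_auto).
  apply Rle_trans with (L ^ 2 * (grad_norm2 (u t) - grad_norm2 (v t)) ^ 2).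
  - replace (L ^ 2 * (grad_norm2 (u t) - grad_norm2 (v t)) ^ 2)
      with ((L * Rabs (grad_norm2 (u t) - grad_norm2 (v t))) ^ 2)
      by (rewrite Rpow_mult_distr, pow2_abs; ring).
    apply sq_le_of_abs_le, HLip; auto.
  - apply Rmult_le_compat_l; [apply pow2_ge_0|].
    apply grad_norm2_diff_sq; [exact (cont2_0PI_slice _ t Jux) | exact (cont2_0PI_slice _ t Jvx)].
Qed.

Lemma residual_eq a f lambda u v t x :
  global_solution a f lambda u -> global_solution a f lambda v -> 0 < x < PI ->
  uT u t x - uT v t x - a (grad_norm2 (u t)) * (uXX u t x - uXX v t x) =
  (a (grad_norm2 (u t)) - a (grad_norm2 (v t))) * uXX v t x + lambda * (f (u t x) - f (v t x)).
Proof.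
  intros [_ [_ [_ [_ [_ [_ [_ PDEu]]]]]]] [_ [_ [_ [_ [_ [_ [_ PDEv]]]]]]] Hx.
  unfold uT, uXX. rewrite (PDEu t x Hx), (PDEv t x Hx). ring.
Qed.

Lemma residual_bound a f lambda m M u v T0 T1 : hyp_a a m M -> hyp_f f ->
  global_solution a f lambda u -> global_solution a f lambda v ->
  exists C1 C2, 0 <= C1 /\ 0 <= C2 /\ forall t, T0 <= t <= T1 ->
    norm2 (fun s x => field_diff (uT u) (uT v) s x
                      - a (grad_norm2 (u t)) * field_diff (uXX u) (uXX v) s x) t <=
    C1 * norm2 (field_diff (uX u) (uX v)) t + C2 * norm2 (field_diff u v) t.
Proof.
  intros Ha Hf Su Sv. pose proof PI_RGT_0.
  destruct (global_solution_smooth _ _ _ _ Su) as [Ju Jux Juxx Jut _ _ _ _].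
  destruct (global_solution_smooth _ _ _ _ Sv) as [Jv Jvx Jvxx Jvt _ _ _ _].
  destruct (cont2_0PI_bounded u T0 T1 Ju) as [Bu HBu].
  destruct (cont2_0PI_bounded v T0 T1 Jv) as [Bv HBv].
  destruct (cont2_0PI_bounded (uXX v) T0 T1 Jvxx) as [Bvxx HBvxx].
  destruct (cont2_0PI_bounded (fun t x => uX u t x + uX v t x) T0 T1) as [Bq HBq].
  { now apply cont2_0PI_plus. }
  set (R0 := Rmax (Rabs Bu) (Rabs Bv)).
  assert (HR0 : 0 <= R0) by (unfold R0; eapply Rle_trans; [apply Rabs_pos | apply Rmax_l]).
  destruct Hf as [[Hf1 [Hf2 _]] _].
  destruct (C1_locally_lipschitz f R0) as [Kf [HKf Hflip]]; auto.
  { intros y. apply (is_derive_continuity_pt _ y (Derive (Derive f) y)), Derive_correct, Hf2. }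
  destruct Ha as [_ [_ [[L [HL HLip]] _]]].
  set (V := PI * Bvxx ^ 2). set (Q := PI * Bq ^ 2).
  assert (0 <= V) by (apply Rmult_le_pos; [lra | apply pow2_ge_0]).
  assert (0 <= Q) by (apply Rmult_le_pos; [lra | apply pow2_ge_0]).
  pose proof (pow2_ge_0 L); pose proof (pow2_ge_0 lambda); pose proof (pow2_ge_0 Kf).
  exists (2 * L ^ 2 * V * Q), (2 * lambda ^ 2 * Kf ^ 2).
  split; [apply Rmult_le_pos; [|lra]; apply Rmult_le_pos; lra|].
  split; [apply Rmult_le_pos; lra|].
  intros t Ht.
  set (c := a (grad_norm2 (u t)) - a (grad_norm2 (v t))).
  set (P := norm2 (field_diff (uX u) (uX v)) t).
  assert (HP : 0 <= P) by (apply RInt_sq_nonneg; unfold field_diff; cont_0PI_auto).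
  assert (Hc : c ^ 2 <= L ^ 2 * (P * Q)).
  { apply Rle_trans with (L ^ 2 * (P * RInt (fun x => (uX u t x + uX v t x) ^ 2) 0 PI)).
    - apply diffusion_gap_sq_le; auto.
    - apply Rmult_le_compat_l; auto. apply Rmult_le_compat_l; auto.
      apply RInt_sq_le_const; [cont_0PI_auto|]. intros; apply HBq; auto. }
  assert (Hvxx : RInt (fun x => uXX v t x ^ 2) 0 PI <= V).
  { apply RInt_sq_le_const; [cont_0PI_auto|]. intros; apply HBvxx; auto. }
  unfold norm2, field_diff. eapply Rle_trans.
  - apply (RInt_sq_le_combination _ (uXX v t) (fun x => u t x - v t x) (2 * c ^ 2)
             (2 * lambda ^ 2 * Kf ^ 2)); try cont_0PI_auto.
    intros x Hx. rewrite (residual_eq a f lambda u v t x Su Sv Hx).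
    apply sq_plus_lipschitz_le, Hflip.
    + apply Rle_trans with Bu; [apply HBu; lra|].
      unfold R0. eapply Rle_trans; [apply Rle_abs | apply Rmax_l].
    + apply Rle_trans with Bv; [apply HBv; lra|].
      unfold R0. eapply Rle_trans; [apply Rle_abs | apply Rmax_r].
  - assert (c ^ 2 * RInt (fun x => uXX v t x ^ 2) 0 PI <= c ^ 2 * V)
      by (apply Rmult_le_compat_l; [apply pow2_ge_0 | auto]).
    assert (c ^ 2 * V <= L ^ 2 * (P * Q) * V) by (apply Rmult_le_compat_r; auto).
    lra.
Qed.

Lemma norm2_diff_zero_propagates a f lambda m M u v T0 T1 :
  hyp_a a m M -> hyp_f f -> global_solution a f lambda u -> global_solution a f lambda v ->
  T0 <= T1 ->
  (norm2 (field_diff u v) T0 = 0 -> norm2 (field_diff u v) T1 = 0) /\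
  (norm2 (field_diff u v) T1 = 0 -> norm2 (field_diff u v) T0 = 0).
Proof.
  intros Ha Hf Su Sv HT.
  destruct (residual_bound a f lambda m M u v T0 T1 Ha Hf Su Sv) as [C1 [C2 [HC1 [HC2 HG]]]].
  pose proof (global_solution_smooth _ _ _ _ Su) as Hu.
  pose proof (smooth_field_diff _ _ _ _ _ _ _ _ Hu (global_solution_smooth _ _ _ _ Sv)) as HW.
  destruct Ha as [_ [_ [_ [Hm Hab]]]].
  pose proof (sf_cont_x _ _ _ _ Hu).
  pose proof (sf_cont _ _ _ _ HW); pose proof (sf_cont_x _ _ _ _ HW).
  pose proof (sf_cont_xx _ _ _ _ HW); pose proof (sf_cont_t _ _ _ _ HW).
  set (W := field_diff u v). set (Wx := field_diff (uX u) (uX v)).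
  set (Wxx := field_diff (uXX u) (uXX v)). set (Wt := field_diff (uT u) (uT v)).
  set (al := fun t => a (grad_norm2 (u t))).
  set (G := fun t => norm2 (fun s x => Wt s x - al t * Wxx s x) t).
  assert (Hbounds : forall t, T0 <= t <= T1 ->
    0 <= norm2 W t /\ 0 <= norm2 Wx t /\ m <= al t /\ al t <= M /\ 0 <= G t /\
    G t <= C1 * norm2 Wx t + C2 * norm2 W t).
  { intros t Ht.
    assert (Hp : 0 <= grad_norm2 (u t)) by (apply (RInt_sq_nonneg (uX u t)); cont_0PI_auto).
    destruct (Hab _ Hp).
    split; [apply RInt_sq_nonneg; cont_0PI_auto|].
    split; [apply RInt_sq_nonneg; cont_0PI_auto|].
    split; [auto|]. split; [auto|].
    split; [unfold G, norm2; apply RInt_sq_nonneg; cont_0PI_auto | exact (HG t Ht)]. }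
  split.
  - apply (energy_forward_zero (norm2 W) (inner Wt W) (norm2 Wx) G al m M C1 C2); auto.
    + apply (is_derive_norm2 W Wx Wxx Wt HW).
    + intros t k _ Hk. unfold G. apply (energy_upper W Wx Wxx Wt HW t (al t) k Hk).
  - apply (energy_backward_zero (norm2 W) (inner Wt W) (norm2 Wx) (inner Wt Wxx) G al m M C1 C2);
      auto.
    + apply (is_derive_norm2 W Wx Wxx Wt HW).
    + apply (is_derive_norm2_x W Wx Wxx Wt HW).
    + intros t _. unfold G. apply (energy_lower W Wx Wxx Wt HW).
    + intros t Ht HN. unfold G. apply (dirichlet_quotient_ineq W Wx Wxx Wt HW); auto.
      destruct (Hbounds t Ht) as [_ [_ [? _]]]. lra.
Qed.

Lemma same_state_norm2_diff u v t : same_state (u t) (v t) -> norm2 (field_diff u v) t = 0.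
Proof.
  intros H. pose proof PI_RGT_0. unfold norm2, field_diff.
  rewrite (RInt_ext _ (fun _ => 0)).
  - rewrite (RInt_const (V:=R_CompleteNormedModule)). unfold scal; simpl; unfold mult; simpl. ring.
  - intros x Hx. rewrite Rmin_left, Rmax_right in Hx by lra. rewrite H by lra. simpl. ring.
Qed.

Lemma norm2_diff_same_state u v t : cont2_0PI u -> cont2_0PI v ->
  norm2 (field_diff u v) t = 0 -> same_state (u t) (v t).
Proof.
  intros Hu Hv HN x Hx. apply Rminus_diag_uniq.
  apply (RInt_sq_eq0 (fun x => u t x - v t x)); auto. cont_0PI_auto.
Qed.

Lemma jcont_shift g c : jcont g -> jcont (fun t x => g (t + c) x).
Proof.
  intros H t x Hx eps He. destruct (H (t + c) x Hx eps He) as [d [Hd K]].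
  exists d; split; auto. intros t' x' Hx' Ht' Hxx'. apply K; auto.
  replace (t' + c - (t + c)) with (t' - t) by ring. auto.
Qed.

Lemma jcont_ext_0PI g h : (forall t x, 0 <= x <= PI -> g t x = h t x) -> jcont g -> jcont h.
Proof.
  intros E H t x Hx eps He. destruct (H t x Hx eps He) as [d [Hd K]].
  exists d; split; auto. intros t' x' Hx' Ht' Hxx'. rewrite <- !E; auto.
Qed.

Lemma global_solution_shift a f lambda u c : global_solution a f lambda u ->
  global_solution a f lambda (fun t => u (t + c)).
Proof.
  intros [H1 [H2 [H3 [H4 [H5 [H6 [H7 H8]]]]]]].
  assert (DS : forall t x, 0 <= x <= PI ->
            is_derive (fun s => u (s + c) x) t (Derive (fun s => u s x) (t + c))).
  { intros t x Hx.
    assert (Hsh : is_derive (fun s => s + c) t 1) by (auto_derive; [exact I | ring]).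
    generalize (is_derive_comp (fun s => u s x) (fun s => s + c) t _ _
                  (Derive_correct _ _ (H2 (t + c) x Hx)) Hsh).
    unfold scal; simpl; unfold mult; simpl. now rewrite Rmult_1_l. }
  assert (DE : forall t x, 0 <= x <= PI ->
            Derive (fun s => u (s + c) x) t = Derive (fun s => u s x) (t + c))
    by (intros; apply is_derive_unique, DS; auto).
  split; [intros t x; apply H1|]. split; [intros t x Hx; eexists; apply DS, Hx|].
  split; [apply (jcont_shift u c H3)|].
  split; [apply (jcont_shift (fun t x => Derive (u t) x) c H4)|].
  split; [apply (jcont_shift (fun t x => Derive_n (u t) 2 x) c H5)|].
  split.
  { apply (jcont_ext_0PI (fun t x => Derive (fun s => u s x) (t + c))).
    - intros; symmetry; apply DE; auto.
    - apply (jcont_shift (fun t x => Derive (fun s => u s x) t) c H6). }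
  split; [intros t; apply H7|].
  intros t x Hx. rewrite DE by lra. apply H8, Hx.
Qed.

Theorem proposition2p2 (lambda m M : R) (a f : R -> R) (u v : R -> R -> R) :
  0 < lambda -> hyp_a a m M -> hyp_f f ->
  global_solution a f lambda u -> global_solution a f lambda v ->
  (exists s t, same_state (u s) (v t)) ->
  (forall s, exists t, same_state (u s) (v t)) /\
  (forall t, exists s, same_state (v t) (u s)).
Proof.
  intros _ Ha Hf Su Sv [s0 [t0 Hst]].
  set (c := t0 - s0).
  assert (Sv' : global_solution a f lambda (fun t => v (t + c))) by (apply global_solution_shift; auto).
  assert (Hsame : forall t, same_state (u t) (v (t + c))).
  { intros t.
    apply (norm2_diff_same_state u (fun t => v (t + c)));
      [apply (global_solution_smooth _ _ _ _ Su) | apply (global_solution_smooth _ _ _ _ Sv') |].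
    assert (H0 : norm2 (field_diff u (fun t => v (t + c))) s0 = 0).
    { apply same_state_norm2_diff. unfold c. now replace (s0 + (t0 - s0)) with t0 by ring. }
    destruct (Rle_lt_dec s0 t) as [Hle|Hlt].
    - exact (proj1 (norm2_diff_zero_propagates _ _ _ _ _ _ _ _ _ Ha Hf Su Sv' Hle) H0).
    - exact (proj2 (norm2_diff_zero_propagates _ _ _ _ _ _ _ _ _ Ha Hf Su Sv' (Rlt_le _ _ Hlt)) H0). }
  split.
  - intros s. exists (s + c). apply Hsame.
  - intros t. exists (t - c). intros x Hx.
    pose proof (Hsame (t - c) x Hx) as H. replace (t - c + c) with t in H by ring.
    now symmetry.
Qed.
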